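(* Let $M\ge 2$ be an integer. For all integers $1\le m\le M-1$ and all $z\in\mathbb{C}$, $$|t_m(z)|\le m^2\,2^{6m}\sup_{0\le\xi\le m}\big(\max\{|z+\xi|,M\}\big)^m.$$
   Context: For an integer $M\ge1$ and $0\le m\le M-1$, let $p_m(x)=x(x-1)\cdots(x-m+1)(x-M)(x-M-1)\cdots(x-M-m+1)$ and define the discrete Chebyshev polynomial $t_m(x)=\frac{1}{m!}\sum_{j=0}^m(-1)^j\binom{m}{j}p_m(x+m-j)$ (i.e. $\frac{1}{m!}$ times the $m$-th forward difference of $p_m$), viewed as a polynomial on $\mathbb{C}$. *)

From HB Require Import structures.
From mathcomp Require Import all_boot all_order all_algebra.
From mathcomp Require Import reals.
From mathcomp.real_closed Require Import complex.
Set Implicit Arguments. Unset Strict Implicit. Unset Printing Implicit Defensive.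
Import Order.TTheory GRing.Theory Num.Theory.
Local Open Scope ring_scope.

Definition pm (R : realType) (M m : nat) (x : R[i]) : R[i] :=
  \prod_(i < m) ((x - i%:R) * (x - (M + i)%:R)).

Definition tm (R : realType) (M m : nat) (x : R[i]) : R[i] :=
  (m`!%:R)^-1 * \sum_(j < m.+1) ((-1) ^+ j * ('C(m, j))%:R * pm M m (x + (m - j)%:R)).

Definition cabs (R : realType) (z : R[i]) : R := Normc.normc z.

(* Writing Δf(x) = f(x+1) - f(x), t_m is Δ^m p_m / m! with p_m(x) = (x)_m (x-M)_m, where (x)_n is the
   falling factorial.  The Leibniz rule for Δ and Δ^k (x)_n = n^_k (x)_(n-k) give the exact expansion
   t_m(z) = Σ_k C(m,k)^2 (z)_(m-k) (z+k-M)_k.  Each product of falling factorials is at most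
   (|z|+M)^m ≤ 2^m max(|z|,M)^m in modulus, and Σ_k C(m,k)^2 = C(2m,m) ≤ 4^m; only the value
   ξ = 0 of the supremum is needed. *)
From HB Require Import structures.
From mathcomp Require Import all_boot all_order all_algebra.
From mathcomp Require Import reals.
From mathcomp.real_closed Require Import complex.
From mathcomp Require Import zify ring lra.
Import Order.TTheory GRing.Theory Num.Theory.
Local Open Scope ring_scope.

Lemma leq_bin_exp2 n k : ('C(n, k) <= 2 ^ n)%N.
Proof.
elim: n k => [|n IHn] [|k] //=; first by rewrite bin0 expn_gt0.
by rewrite binS expnS mul2n -addnn leq_add.
Qed.

Lemma sum_bin_sqr m : (\sum_(k < m.+1) 'C(m, k) ^ 2 = 'C(m + m, m))%N.
Proof.
rewrite -binomial.Vandermonde; apply: eq_bigr => k _.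
by rewrite bin_sub ?mulnn // -ltnS.
Qed.

Lemma ffact_mul_ffact_sub m k : (k <= m)%N ->
  (m ^_ k * m ^_ (m - k) = 'C(m, k) * m`!)%N.
Proof.
move=> le_km; rewrite -bin_ffact -mulnA; congr (_ * _).
by rewrite -{1}(subKn le_km) mulnC ffact_fact ?leq_subr.
Qed.

Section FiniteDifference.
Variable C : comNzRingType.

Definition fdiff (f : C -> C) (x : C) : C := f (x + 1) - f x.

Lemma iter_fdiffS n f x :
  iter n.+1 fdiff f x = iter n fdiff f (x + 1) - iter n fdiff f x.
Proof. by []. Qed.

Lemma iter_fdiff_shift n f a x :
  iter n fdiff (fun y => f (y + a)) x = iter n fdiff f (x + a).
Proof. by elim: n x => [|n IHn] x //; rewrite !iter_fdiffS !IHn addrAC. Qed.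

Lemma sum_binS n (a : nat -> C) :
  \sum_(j < n.+2) 'C(n.+1, j)%:R * a j =
  \sum_(j < n.+1) 'C(n, j)%:R * a j + \sum_(j < n.+1) 'C(n, j)%:R * a j.+1.
Proof.
rewrite big_ord_recl [in RHS]big_ord_recl !bin0 -addrA; congr (_ + _).
under eq_bigr => i _ do rewrite binS natrD mulrDl.
by rewrite big_split /= big_ord_recr /= bin_small // mul0r addr0.
Qed.

Lemma iter_fdiffE n f x :
  iter n fdiff f x = \sum_(j < n.+1) (-1) ^+ j * 'C(n, j)%:R * f (x + (n - j)%:R).
Proof.
elim: n x => [|n IHn] x; first by rewrite big_ord1 expr0 !mul1r addr0.
transitivity (\sum_(j < n.+2) 'C(n.+1, j)%:R * ((-1) ^+ j * f (x + (n.+1 - j)%:R)));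
  last by apply: eq_bigr => j _; rewrite mulrCA mulrA.
rewrite [RHS](sum_binS n (fun j => (-1) ^+ j * f (x + (n.+1 - j)%:R))).
rewrite iter_fdiffS !IHn -sumrN; congr (_ + _); apply: eq_bigr => j _.
  by rewrite mulrCA mulrA subSn ?(ltnSE (ltn_ord j)) // -natr1; congr (_ * f _); ring.
by rewrite subSS exprS mulN1r mulNr mulrN mulrCA mulrA.
Qed.

Lemma iter_fdiffM n f g x :
  iter n fdiff (fun y => f y * g y) x =
  \sum_(k < n.+1) 'C(n, k)%:R * (iter k fdiff f x * iter (n - k) fdiff g (x + k%:R)).
Proof.
elim: n x => [|n IHn] x; first by rewrite big_ord1 mul1r addr0.
rewrite [RHS](sum_binS n (fun k => iter k fdiff f x * iter (n.+1 - k) fdiff g (x + k%:R))).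
rewrite iter_fdiffS !IHn -sumrB -big_split; apply: eq_bigr => k _ /=.
rewrite subSS subSn ?(ltnSE (ltn_ord k)) // !iter_fdiffS [fdiff _ x]/fdiff -natr1 addrAC addrA; ring.
Qed.

Definition falling (n : nat) (x : C) : C := \prod_(i < n) (x - i%:R).

Lemma fdiff_falling n x : fdiff (falling n.+1) x = n.+1%:R * falling n x.
Proof.
rewrite /fdiff /falling big_ord_recl big_ord_recr /= subr0.
have -> : \prod_(i < n) (x + 1 - (bump 0 i)%:R) = \prod_(i < n) (x - i%:R).
  by apply: eq_bigr => i _; rewrite /bump add1n -addn1 natrD; ring.
rewrite -addn1 natrD; ring.
Qed.

Lemma iter_fdiff_falling k n x :
  iter k fdiff (falling n) x = (n ^_ k)%:R * falling (n - k) x.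
Proof.
elim: k x => [|k IHk] x; first by rewrite ffactn0 subn0 mul1r.
rewrite iter_fdiffS !IHk -mulrBr ffactnSr subnS natrM.
case: (n - k)%N => [|d]; last by rewrite -mulrA -fdiff_falling.
by rewrite /falling !big_ord0 subrr mulr0 mul0r.
Qed.

End FiniteDifference.

Arguments fdiff {C}.
Arguments falling {C}.

Section Modulus.
Variable R : realType.
Implicit Types (x y z : R[i]).
Local Open Scope complex_scope.

Lemma normcE z : `|z| = (cabs z)%:C.
Proof. by case: z => a b; rewrite normc_def. Qed.

Lemma cabs_ge0 z : 0 <= cabs z.
Proof. by rewrite -ler0c -normcE. Qed.

Lemma cabs_nat n : cabs (n%:R : R[i]) = n%:R.
Proof. by apply: complexI; rewrite -normcE normr_nat rmorph_nat. Qed.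

Lemma cabsN z : cabs (- z) = cabs z.
Proof. by apply: complexI; rewrite -!normcE normrN. Qed.

Lemma cabsM x y : cabs (x * y) = cabs x * cabs y.
Proof. by apply: complexI; rewrite rmorphM -!normcE normrM. Qed.

Lemma cabsD x y : cabs (x + y) <= cabs x + cabs y.
Proof. by rewrite -lecR rmorphD /= -!normcE ler_normD. Qed.

Lemma cabs_sum n (F : 'I_n -> R[i]) :
  cabs (\sum_(i < n) F i) <= \sum_(i < n) cabs (F i).
Proof.
rewrite -lecR -normcE rmorph_sum; apply: le_trans (ler_norm_sum _ _ _) _.
by apply: ler_sum => i _; rewrite normcE.
Qed.

Lemma cabs_prod n (F : 'I_n -> R[i]) :
  cabs (\prod_(i < n) F i) = \prod_(i < n) cabs (F i).
Proof.
apply: complexI; rewrite rmorph_prod -normcE normr_prod.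
by apply: eq_bigr => i _; rewrite normcE.
Qed.

Lemma cabs_falling_le n z r : cabs z + n%:R <= r -> cabs (falling n z) <= r ^+ n.
Proof.
move=> le_zr; rewrite /falling cabs_prod -[n in _ ^+ n]card_ord -prodr_const.
apply: ler_prod => i _; rewrite cabs_ge0 /=.
apply: le_trans (cabsD _ _) (le_trans _ le_zr).
by rewrite cabsN cabs_nat lerD2l ler_nat ltnW.
Qed.

Lemma tm_falling_sum M m z :
  tm M m z = \sum_(k < m.+1) ('C(m, k) ^ 2)%:R *
                (falling (m - k) z * falling k (z + k%:R - M%:R)).
Proof.
have -> : tm M m z = (m`!%:R)^-1 *
    iter m fdiff (fun y => falling m y * falling m (y - M%:R)) z.
  rewrite /tm iter_fdiffE; congr (_ * _); apply: eq_bigr => j _.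
  rewrite /pm /falling -big_split; congr (_ * _); apply: eq_bigr => i _.
  by rewrite natrD opprD addrA addrAC.
have m_fact_neq0 : m`!%:R != 0 :> R[i] by rewrite pnatr_eq0 -lt0n fact_gt0.
rewrite iter_fdiffM mulr_sumr; apply: eq_bigr => k _.
have le_km : (k <= m)%N by rewrite -ltnS.
rewrite iter_fdiff_shift !iter_fdiff_falling subKn //.
transitivity ((m`!%:R)^-1 * (('C(m, k) * (m ^_ k * m ^_ (m - k)))%:R *
    (falling (m - k) z * falling k (z + k%:R - M%:R)))); first by rewrite !natrM; ring.
rewrite ffact_mul_ffact_sub // mulnA mulnn natrM [_ * m`!%:R]mulrC -mulrA.
by rewrite mulKf.
Qed.

Lemma cabs_tm_le {M m} z : (m <= M)%N ->
  cabs (tm M m z) <= 'C(m + m, m)%:R * (cabs z + M%:R) ^+ m.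
Proof.
move=> le_mM; rewrite tm_falling_sum -sum_bin_sqr natr_sum mulr_suml.
apply: le_trans (cabs_sum _ _) _; apply: ler_sum => k _.
have le_km : (k <= m)%N by rewrite -ltnS.
rewrite !cabsM cabs_nat ler_wpM2l //.
have -> : (cabs z + M%:R) ^+ m = (cabs z + M%:R) ^+ (m - k) * (cabs z + M%:R) ^+ k.
  by rewrite -exprD subnK.
apply: ler_pM; rewrite ?cabs_ge0 //.
- by apply: cabs_falling_le; rewrite lerD2l ler_nat (leq_trans (leq_subr _ _)).
- apply: cabs_falling_le; have le_kM := leq_trans le_km le_mM.
  rewrite -addrA -opprB -natrB //.
  have := cabsD z (- (M - k)%:R); rewrite cabsN cabs_nat !natrB //; lra.
Qed.

End Modulus.

Theorem lemma3 (R : realType) (M m : nat) :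
  (2 <= M)%N -> (1 <= m)%N -> (m <= M - 1)%N ->
  forall (z : R[i]) (B : R),
    (forall xi : R, 0 <= xi <= m%:R ->
       Num.max (cabs (z + (xi%:C)%C)) M%:R ^+ m <= B) ->
    cabs (tm M m z) <= (m ^ 2 * 2 ^ (6 * m))%:R * B.
Proof.
move=> _ m_gt0 le_mM1 z B HB.
have le_mM : (m <= M)%N by rewrite (leq_trans le_mM1) ?leq_subr.
set A := Num.max (cabs z) M%:R.
have AmB : A ^+ m <= B by have := HB 0; rewrite lexx ler0n rmorph0 addr0; apply.
have zA : cabs z <= A by rewrite le_max lexx.
have MA : M%:R <= A by rewrite le_max lexx orbT.
have A_ge0 : 0 <= A by rewrite (le_trans _ MA).
apply: le_trans (cabs_tm_le R z le_mM) _.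
apply: le_trans (_ : _ <= (2 ^ (m + m))%:R * (2 * A) ^+ m) _.
  apply: ler_pM; rewrite ?ler0n ?exprn_ge0 ?addr_ge0 ?cabs_ge0 ?ler_nat ?leq_bin_exp2 //.
  by apply: lerXn2r; rewrite ?nnegrE ?addr_ge0 ?cabs_ge0 ?mulr_ge0 //; lra.
rewrite exprMn mulrA -natrX -natrM.
apply: ler_pM; rewrite ?ler0n ?exprn_ge0 // ler_nat -expnD.
apply: leq_trans (leq_pmull _ _); last by rewrite expn_gt0 m_gt0.
by rewrite leq_exp2l //; lia.
Qed.
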